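(* For every simple transitive type $T$, $I\ \llbracket T\cdot T\to T\rrbracket_e\ I$; that is, whenever $x\,\llbracket T\rrbracket_e\,y$ and $y\,\llbracket T\rrbracket_e\,z$, also $x\,\llbracket T\rrbracket_e\,z$.
   Context: Terms are those of the pure untyped $\lambda$-calculus, up to $\alpha$-equivalence; $=_{\beta\eta}$ is $\beta\eta$-convertibility; $I:=\lambda x.x$. Relational types: $R ::= X \mid R\to R' \mid \forall X.R \mid R^{\cup} \mid R\cdot R' \mid t$ (last form: promotion of a term). A relation on terms is $\beta\eta$-closed if closed under replacing either related term by a $\beta\eta$-equal one; $\mathcal{R}$ is the set of such relations; environments map type variables to $\mathcal{R}$. Interpretation: $\llbracket X\rrbracket_\gamma=\gamma(X)$; $t\,\llbracket R\to R'\rrbracket_\gamma\,t'$ iff for all $a,a'$ with $a\,\llbracket R\rrbracket_\gamma\,a'$, $t\,a\,\llbracket R'\rrbracket_\gamma\,t'\,a'$; $\llbracket \forall X.R\rrbracket_\gamma=\bigcap_{r\in\mathcal{R}}\llbracket R\rrbracket_{\gamma[X\mapsto r]}$; $t\,\llbracket R^\cup\rrbracket_\gamma\,t'$ iff $t'\,\llbracket R\rrbracket_\gamma\,t$; $t\,\llbracket R\cdot R'\rrbracket_\gamma\,t'$ iff $\exists t''$, $t\,\llbracket R\rrbracket_\gamma\,t''$ and $t''\,\llbracket R'\rrbracket_\gamma\,t'$; $\llbracket \hat t\rrbracket_\gamma=\{(t,t')\mid \hat t\,t=_{\beta\eta}t'\}$. $e$ maps every type variable to $=_{\beta\eta}$.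 Polarities $p\in\{+,-\}$, $\bar p$ the other; $\forall^p$: type variables are $\forall^p$; if $R$ is $\forall^{\bar p}$ and $R'$ is $\forall^p$ then $R\to R'$ is $\forall^p$; if $R$ is $\forall^+$ then $\forall X.R$ is $\forall^+$; if $R$ is $\forall^p$ then so is $R^\cup$; a promotion of $t=_{\beta\eta}I$ is $\forall^p$. $P$ ranges over $\forall^+$ types, $N$ over $\forall^-$ types. Write $t\bullet R:=t\cdot R\cdot t^\cup$. Simple transitive types: $T ::= P \mid P\to T \mid N\to T \mid t\bullet T$ ($t$ any term). *)

From Stdlib Require Import Arith.

Inductive term : Type :=
| Var : nat -> term
| App : term -> term -> term
| Lam : term -> term.

Fixpoint lift (d c : nat) (t : term) : term :=
  match t with
  | Var n => if n <? c then Var n else Var (n + d)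
  | App t1 t2 => App (lift d c t1) (lift d c t2)
  | Lam t1 => Lam (lift d (S c) t1)
  end.

Fixpoint subst (k : nat) (u : term) (t : term) : term :=
  match t with
  | Var n => if n =? k then lift k 0 u
             else if k <? n then Var (pred n) else Var n
  | App t1 t2 => App (subst k u t1) (subst k u t2)
  | Lam t1 => Lam (subst (S k) u t1)
  end.

Inductive bconv : term -> term -> Prop :=
| bc_beta : forall t u, bconv (App (Lam t) u) (subst 0 u t)
| bc_eta : forall t, bconv (Lam (App (lift 1 0 t) (Var 0))) t
| bc_refl : forall t, bconv t t
| bc_sym : forall t u, bconv t u -> bconv u t
| bc_trans : forall t u v, bconv t u -> bconv u v -> bconv t v
| bc_app : forall t t' u u', bconv t t' -> bconv u u' -> bconv (App t u) (App t' u')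
| bc_lam : forall t t', bconv t t' -> bconv (Lam t) (Lam t').

Definition I : term := Lam (Var 0).

Inductive rtype : Type :=
| RVar : nat -> rtype
| RArr : rtype -> rtype -> rtype
| RAll : nat -> rtype -> rtype
| RConv : rtype -> rtype
| RComp : rtype -> rtype -> rtype
| RTerm : term -> rtype.

Definition rel := term -> term -> Prop.

Definition bclosed (r : rel) : Prop :=
  forall t t' u u', bconv t u -> bconv t' u' -> r t t' -> r u u'.

Definition env := nat -> rel.

Definition upd (g : env) (X : nat) (r : rel) : env :=
  fun Y => if Y =? X then r else g Y.

Fixpoint interp (g : env) (R : rtype) : rel :=
  match R with
  | RVar X => g X
  | RArr R1 R2 => fun t t' =>
      forall a a', interp g R1 a a' -> interp g R2 (App t a) (App t' a')
  | RAll X R1 => fun t t' =>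
      forall r : rel, bclosed r -> interp (upd g X r) R1 t t'
  | RConv R1 => fun t t' => interp g R1 t' t
  | RComp R1 R2 => fun t t' =>
      exists t'', interp g R1 t t'' /\ interp g R2 t'' t'
  | RTerm s => fun t t' => bconv (App s t) t'
  end.

Definition e : env := fun _ => bconv.

Inductive pol := Pos | Neg.
Definition flip (p : pol) : pol := match p with Pos => Neg | Neg => Pos end.

Inductive isForall : pol -> rtype -> Prop :=
| fa_var : forall p X, isForall p (RVar X)
| fa_arr : forall p R R', isForall (flip p) R -> isForall p R' -> isForall p (RArr R R')
| fa_all : forall X R, isForall Pos R -> isForall Pos (RAll X R)
| fa_conv : forall p R, isForall p R -> isForall p (RConv R)
| fa_term : forall p t, bconv t I -> isForall p (RTerm t).

Definition bullet (t : term) (R : rtype) : rtype :=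
  RComp (RComp (RTerm t) R) (RConv (RTerm t)).

Inductive simple_trans : rtype -> Prop :=
| st_P : forall P, isForall Pos P -> simple_trans P
| st_PT : forall P T, isForall Pos P -> simple_trans T -> simple_trans (RArr P T)
| st_NT : forall N T, isForall Neg N -> simple_trans T -> simple_trans (RArr N T)
| st_bullet : forall t T, simple_trans T -> simple_trans (bullet t T).

(* Under the environment [e], every forall+ type is contained in beta-eta
   convertibility and every forall- type contains it.  The only non-routine
   case is the arrow, which needs extensionality of beta-eta convertibility:
   if [x a] and [y a] are convertible for all [a], then instantiating [a] with
   a fresh variable and abstracting it (eta) shows [x] and [y] convertible.
   Transitivity of a simple transitive type then follows by induction: for
   [P], [x P y] makes [x] and [y] convertible; for [P -> T] an argument [a P a'] also
   gives [a' P a'], and for [N -> T] every [a] satisfies [a N a], so the two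
   hypotheses can be chained at a common argument; for [t . T . t^cup] the two
   middle witnesses are linked through [t y].  Finally [I a] converts to [a]. *)
From Stdlib Require Import Arith Lia FunctionalExtensionality.

Ltac case_nat_tests :=
  repeat match goal with
  | |- context [?a <? ?b] => destruct (Nat.ltb_spec a b)
  | |- context [?a =? ?b] => destruct (Nat.eqb_spec a b)
  end.

Definition up (f : nat -> nat) (n : nat) : nat :=
  match n with 0 => 0 | S m => S (f m) end.

Fixpoint upn (k : nat) (f : nat -> nat) : nat -> nat :=
  match k with 0 => f | S k' => up (upn k' f) end.

Fixpoint ren (f : nat -> nat) (t : term) : term :=
  match t with
  | Var n => Var (f n)
  | App a b => App (ren f a) (ren f b)
  | Lam a => Lam (ren (up f) a)
  end.

Lemma upnE k f n : upn k f n = if n <? k then n else k + f (n - k).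
Proof.
  revert n; induction k as [|k IHk]; intros [|n]; simpl; trivial.
  rewrite IHk; case_nat_tests; lia.
Qed.

Lemma ren_lift u j k f :
  ren (upn j (upn k f)) (lift k j u) = lift k j (ren (upn j f) u).
Proof.
  revert j; induction u as [n|u1 IH1 u2 IH2|u IH]; intro j; simpl.
  - rewrite !upnE; case_nat_tests; simpl; rewrite ?upnE; case_nat_tests;
      try lia; trivial.
    replace (n + k - j - k) with (n - j) by lia; f_equal; lia.
  - now rewrite IH1, IH2.
  - f_equal; apply (IH (S j)).
Qed.

Lemma ren_subst t k u f :
  ren (upn k f) (subst k u t) = subst k (ren f u) (ren (upn (S k) f) t).
Proof.
  revert k; induction t as [n|t1 IH1 t2 IH2|t IH]; intro k; simpl.
  - change (up (upn k f)) with (upn (S k) f); rewrite (upnE (S k)).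
    case_nat_tests; simpl; rewrite ?upnE; case_nat_tests; try lia; trivial.
    + replace (Nat.pred n - k) with (n - S k) by lia; f_equal; lia.
    + exact (ren_lift u 0 k f).
- now rewrite IH1, IH2.
  - f_equal; apply (IH (S k)).
Qed.

Lemma bconv_ren t u f : bconv t u -> bconv (ren f t) (ren f u).
Proof.
  intro H; revert f; induction H; intro f; simpl.
  - rewrite (ren_subst t 0 u f : ren f (subst 0 u t) = _); apply bc_beta.
  - rewrite (ren_lift t 0 1 f : ren (up f) (lift 1 0 t) = _); apply bc_eta.
  - apply bc_refl.
  - now apply bc_sym.
  - eapply bc_trans; eauto.
  - now apply bc_app.
  - now apply bc_lam.
Qed.

Fixpoint fv_below (m : nat) (t : term) : Prop :=
  match t with
  | Var n => n < m
  | App a b => fv_below m a /\ fv_below m b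
  | Lam a => fv_below (S m) a
  end.

Lemma fv_below_mono t m m' : m <= m' -> fv_below m t -> fv_below m' t.
Proof.
  revert m m'; induction t; simpl; intros m m' Hle H.
  - lia.
  - destruct H; split; eauto.
  - apply (IHt (S m)); auto with arith.
Qed.

Lemma fv_below_exists t : exists m, fv_below m t.
Proof.
  induction t as [n|t1 IH1 t2 IH2|t IH]; simpl.
  - exists (S n); lia.
  - destruct IH1 as [m1 H1], IH2 as [m2 H2].
    exists (m1 + m2); split;
      [apply (fv_below_mono t1 m1)|apply (fv_below_mono t2 m2)]; auto; lia.
  - destruct IH as [m H]; exists m; apply (fv_below_mono t m); auto.
Qed.

(* Moves the fresh variable [m] to index [0]. *)
Definition rot_to0 (m n : nat) : nat :=
  if n =? m then 0 else if n <? m then S n else n.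

Lemma ren_rot_to0 t j m :
  fv_below (j + m) t -> ren (upn j (rot_to0 m)) t = lift 1 j t.
Proof.
  revert j; induction t as [n|t1 IH1 t2 IH2|t IH]; simpl; intros j H.
  - rewrite upnE; unfold rot_to0; case_nat_tests; try lia; f_equal; lia.
  - destruct H; now rewrite IH1, IH2.
  - f_equal; exact (IH (S j) H).
Qed.

Lemma bconv_ext x y : (forall a, bconv (App x a) (App y a)) -> bconv x y.
Proof.
  intro Hxy.
  destruct (fv_below_exists x) as [mx Hx], (fv_below_exists y) as [my Hy].
  set (m := mx + my).
  assert (Hx' : ren (rot_to0 m) x = lift 1 0 x).
  { apply (ren_rot_to0 x 0); apply (fv_below_mono x mx); auto; lia. }
  assert (Hy' : ren (rot_to0 m) y = lift 1 0 y).
  { apply (ren_rot_to0 y 0); apply (fv_below_mono y my); auto; lia. }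
  pose proof (bconv_ren _ _ (rot_to0 m) (Hxy (Var m))) as H; simpl in H.
  rewrite Hx', Hy' in H; unfold rot_to0 in H; rewrite Nat.eqb_refl in H.
  eapply bc_trans; [apply bc_sym, bc_eta|].
  eapply bc_trans; [apply bc_lam, H|apply bc_eta].
Qed.

Lemma bconv_bclosed : bclosed bconv.
Proof.
  intros t t' u u' Htu Htu' H.
  eapply bc_trans; [apply bc_sym, Htu|].
  eapply bc_trans; eauto.
Qed.

Lemma interp_bclosed R g : (forall X, bclosed (g X)) -> bclosed (interp g R).
Proof.
  revert g; induction R as [X|R1 IHR1 R2 IHR2|X R IHR|R IHR|R1 IHR1 R2 IHR2|s];
    intros g Hg x x' y y' Hxy Hxy' H; simpl in *.
  - eapply Hg; eauto.
  - intros a a' Ha; eapply IHR2; eauto; apply bc_app; auto using bc_refl.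
  - intros r Hr; eapply IHR; eauto.
    intro Y; unfold upd; destruct (Y =? X); auto.
  - eapply IHR; eauto.
  - destruct H as [w [H1 H2]]; exists w; split;
      [eapply IHR1|eapply IHR2]; eauto using bc_refl.
  - eapply bc_trans; [|eapply bc_trans; [exact H|exact Hxy']].
    apply bc_app; [apply bc_refl|apply bc_sym, Hxy].
Qed.

Lemma interp_e_bclosed R : bclosed (interp e R).
Proof. apply interp_bclosed; intro; exact bconv_bclosed. Qed.

Lemma upd_e X : upd e X bconv = e.
Proof.
  apply functional_extensionality; intro Y; unfold upd, e.
  now destruct (Y =? X).
Qed.

Lemma lift0 t c : lift 0 c t = t.
Proof.
  revert c; induction t; intro c; simpl; f_equal; auto.
  destruct (n <? c); f_equal; lia.
Qed.

Lemma bconv_app_id t x : bconv t I -> bconv (App t x) x.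
Proof.
  intro Ht; eapply bc_trans; [apply bc_app; [exact Ht|apply bc_refl]|].
  pose proof (bc_beta (Var 0) x) as Hbeta; simpl in Hbeta.
  now rewrite lift0 in Hbeta.
Qed.

Definition polarity_incl (p : pol) (r : rel) : Prop :=
  match p with
  | Pos => forall x y, r x y -> bconv x y
  | Neg => forall x y, bconv x y -> r x y
  end.

Lemma isForall_polarity_incl p R : isForall p R -> polarity_incl p (interp e R).
Proof.
  induction 1 as [p X|p R R' _ IHR _ IHR'|X R _ IHR|p R _ IHR|p t Ht];
    simpl in *.
  - now destruct p.
  - destruct p; simpl in *; intros x y Hxy.
    + apply bconv_ext; intro a; apply IHR', Hxy, IHR, bc_refl.
    + intros a a' Ha; apply IHR'; apply bc_app; auto.
  - intros x y Hxy; apply IHR; rewrite <- (upd_e X).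
    exact (Hxy bconv bconv_bclosed).
  - destruct p; intros x y Hxy; [apply bc_sym|]; auto using bc_sym.
  - destruct p; intros x y Hxy.
    + eapply bc_trans; [apply bc_sym, bconv_app_id, Ht|exact Hxy].
    + eapply bc_trans; [apply bconv_app_id, Ht|exact Hxy].
Qed.

Lemma forall_pos_bconv P x y : isForall Pos P -> interp e P x y -> bconv x y.
Proof. intro HP; exact (isForall_polarity_incl Pos P HP x y). Qed.

Lemma forall_neg_refl N x : isForall Neg N -> interp e N x x.
Proof. intro HN; exact (isForall_polarity_incl Neg N HN x x (bc_refl x)). Qed.

Lemma simple_trans_transitive T : simple_trans T ->
  forall x y z, interp e T x y -> interp e T y z -> interp e T x z.
Proof.
  induction 1 as [P HP|P T HP _ IHT|N T HN _ IHT|t T _ IHT];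
    intros x y z Hxy Hyz; simpl in *.
  - eapply interp_e_bclosed;
      [apply bc_sym, (forall_pos_bconv P x y HP Hxy)|apply bc_refl|exact Hyz].
  - intros a a' Ha.
    assert (Ha' : interp e P a' a').
    { eapply interp_e_bclosed;
        [apply (forall_pos_bconv P a a' HP Ha)|apply bc_refl|exact Ha]. }
    eapply IHT; [apply Hxy, Ha|apply Hyz, Ha'].
  - intros a a' Ha.
    eapply IHT; [apply Hxy, forall_neg_refl, HN|apply Hyz, Ha].
  - destruct Hxy as [w1 [[u1 [Hxu1 Hu1w1]] Hyw1]].
    destruct Hyz as [w2 [[u2 [Hyu2 Hu2w2]] Hzw2]].
    exists w2; split; [exists u1; split; [exact Hxu1|]|exact Hzw2].
    apply (IHT u1 u2 w2); [|exact Hu2w2].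
    eapply interp_e_bclosed; [apply bc_refl| |exact Hu1w1].
    eapply bc_trans; [apply bc_sym, Hyw1|exact Hyu2].
Qed.

Theorem mainTheorem13 : forall T : rtype, simple_trans T ->
  interp e (RArr (RComp T T) T) I I.
Proof.
  intros T HT a a' [b [Hab Hba']]; simpl.
  eapply interp_e_bclosed;
    [| |exact (simple_trans_transitive T HT a b a' Hab Hba')];
    apply bc_sym, bconv_app_id, bc_refl.
Qed.
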